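(* Let $M_g$ be an $n\times n$ real matrix and $a_1\in\mathbb R^n$ a unit vector, and suppose $M_g=c\,a_1a_1^\top+N$ with $|c|\ge(1+\beta)\|N\|$ for some $\beta>0$, and $\|Na_1\|,\|N^\top a_1\|\le\epsilon|c|$, where $\frac{2\epsilon(1+\beta)}{\beta}<0.01$. Then, letting $u$ be a top singular vector of $M_g$, $\langle u,a_1\rangle^2\ge 0.99$.
   Context: $\|\cdot\|$ denotes the spectral norm of a matrix and the Euclidean norm of a vector. A top singular vector is a unit singular vector corresponding to the largest singular value. *)

From HB Require Import structures.
From mathcomp Require Import all_boot all_order all_algebra.
From mathcomp Require Import boolp classical_sets reals.
Set Implicit Arguments. Unset Strict Implicit. Unset Printing Implicit Defensive.
Import Order.TTheory GRing.Theory Num.Theory.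
Local Open Scope ring_scope.
Local Open Scope classical_set_scope.

Definition vnorm (R : realType) (n : nat) (v : 'cV[R]_n) : R :=
  Num.sqrt (\sum_(i < n) v i 0 ^+ 2).

Definition vdot (R : realType) (n : nat) (u v : 'cV[R]_n) : R :=
  \sum_(i < n) u i 0 * v i 0.

Definition specnorm (R : realType) (m n : nat) (A : 'M[R]_(m, n)) : R :=
  sup [set vnorm (A *m v) | v in [set v : 'cV[R]_n | vnorm v = 1]].

(* u is a top singular vector of M: a unit vector that is a (right or left)
   singular vector for the largest singular value sigma_max = ||M||,
   i.e. M^T M u = sigma_max^2 u (right) or M M^T u = sigma_max^2 u (left). *)
Definition top_singular_vector (R : realType) (n : nat) (M : 'M[R]_n)
    (u : 'cV[R]_n) : Prop :=
  vnorm u = 1 /\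
  ((M^T *m M *m u = (specnorm M ^+ 2) *: u) \/
   (M *m M^T *m u = (specnorm M ^+ 2) *: u)).

From HB Require Import structures.
From mathcomp Require Import all_boot all_order all_algebra.
From mathcomp Require Import boolp classical_sets reals.
From mathcomp Require Import ring lra.
Set Implicit Arguments.
Unset Strict Implicit.
Import Order.TTheory GRing.Theory Num.Theory.
Local Open Scope ring_scope.
Local Open Scope classical_set_scope.

(** Write the unit vector [u] as [P u + <a,u> a] with [P = orthproj a], and
    let [r = ‖P u‖], so that [<u,a>^2 = 1 - r^2].  Projecting onto the
    orthogonal complement of [a] kills the rank-one part [c a aᵀ], so the
    projections of [M u] and of [Mᵀ M u = s^2 u] only see [N]:
    [‖P (M u)‖ <= σ r + ε|c|] and [s^2 r <= σ ‖P (M u)‖ + s ε|c|], where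
    [σ = ‖N‖] bounds both [N] and [Nᵀ] and [s = ‖M‖ >= |<a, M a>| >= (1 - ε)|c|].
    Hence [(s^2 - σ^2) r <= (s + σ) ε|c|], i.e.
    [r <= ε|c| / (s - σ) <= ε(1+β) / (β - ε(1+β)) < 1/199].
    A left singular vector of [M] is a right singular vector of
    [Mᵀ = c a aᵀ + Nᵀ], to which the same argument applies. *)

Section RealLemmas.
Variable R : realType.

Lemma ler_of_sqr (x y : R) : 0 <= y -> x ^+ 2 <= y ^+ 2 -> x <= y.
Proof.
move=> y_ge0; rewrite -(real_normK (num_real x)) ler_sqr ?nnegrE //.
exact: le_trans (ler_norm x).
Qed.

(* [r] plays the role of [sin ∠(u, a)]. *)
Lemma sin_angle_bound (C sg s e b r : R) :
  0 < C -> 0 < b -> 0 <= sg -> 0 <= e -> 0 <= r ->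
  (1 + b) * sg <= C -> C - e * C <= s ->
  s ^+ 2 * r <= sg ^+ 2 * r + (sg + s) * (e * C) ->
  2 * e * (1 + b) / b < 1 / 100 -> 199 * r <= 1.
Proof.
move=> C_gt0 b_gt0 sg_ge0 e_ge0 r_ge0 sg_le s_ge r_quad.
rewrite ltr_pdivrMr // => small_e.
have small_eC : 200 * e * (1 + b) * C <= b * C by rewrite ler_pM2r //; lra.
have gap : 199 * b * C <= 200 * (1 + b) * (s - sg) by nra.
have s_gt_sg : sg < s by nra.
have wedin : r * (s - sg) <= e * C.
  have : (s + sg) * (r * (s - sg)) <= (s + sg) * (e * C) by nra.
  by rewrite ler_pM2l //; lra.
have : 199 * r * (b * C) <= b * C by nra.
by rewrite -[leRHS]mul1r ler_pM2r ?mulr_gt0.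
Qed.
End RealLemmas.

Section InnerProduct.
Variables (R : realType) (n : nat).
Implicit Types (u v w : 'cV[R]_n).

Lemma vdotC u v : vdot u v = vdot v u.
Proof. by apply: eq_bigr => i _; rewrite mulrC. Qed.

Lemma vdotDl u v w : vdot (u + v) w = vdot u w + vdot v w.
Proof. by rewrite /vdot -big_split; apply: eq_bigr => i _; rewrite !mxE mulrDl. Qed.

Lemma vdotDr u v w : vdot w (u + v) = vdot w u + vdot w v.
Proof. by rewrite vdotC vdotDl !(vdotC w). Qed.

Lemma vdotZl k u v : vdot (k *: u) v = k * vdot u v.
Proof. by rewrite /vdot mulr_sumr; apply: eq_bigr => i _; rewrite !mxE mulrA. Qed.

Lemma vdotZr k u v : vdot v (k *: u) = k * vdot v u.
Proof. by rewrite vdotC vdotZl vdotC. Qed.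

Lemma vdot_comb2 x y u v :
  vdot (x *: u + y *: v) (x *: u + y *: v) =
  x ^+ 2 * vdot u u + 2 * x * y * vdot u v + y ^+ 2 * vdot v v.
Proof. by rewrite !vdotDl !vdotDr !vdotZl !vdotZr (vdotC v u); ring. Qed.

Lemma vdot_trmx u v : vdot u v = (u^T *m v) 0 0.
Proof. by rewrite !mxE; apply: eq_bigr => i _; rewrite !mxE. Qed.

Lemma vdotii_ge0 u : 0 <= vdot u u.
Proof. by apply: sumr_ge0 => i _; rewrite -expr2 sqr_ge0. Qed.

Lemma vdot0l u : vdot 0 u = 0.
Proof. by rewrite -(scale0r (0 : 'cV[R]_n)) vdotZl mul0r. Qed.

Lemma vdotii_eq0 u : (vdot u u == 0) = (u == 0).
Proof.
apply/idP/eqP => [/eqP/psumr_eq0P u0|->]; last by rewrite vdot0l.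
have {}u0 i : u i 0 * u i 0 = 0 by apply: u0 => // k _; rewrite -expr2 sqr_ge0.
apply/matrixP => i j; rewrite (ord1 j) mxE; apply/eqP.
by rewrite -[_ == 0]orbb -mulf_eq0 u0.
Qed.

Lemma vdot_sqr_le u v : vdot u v ^+ 2 <= vdot u u * vdot v v.
Proof.
have [->|u_neq0] := eqVneq u 0; first by rewrite !vdot0l expr0n mul0r.
have uu_gt0 : 0 < vdot u u by rewrite lt_def vdotii_eq0 u_neq0 vdotii_ge0.
have := vdotii_ge0 (vdot u u *: v + (- vdot u v) *: u).
rewrite vdot_comb2 (vdotC v u).
have -> : vdot u u ^+ 2 * vdot v v + 2 * vdot u u * - vdot u v * vdot u v
    + (- vdot u v) ^+ 2 * vdot u u = vdot u u * (vdot u u * vdot v v - vdot u v ^+ 2).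
  by ring.
by rewrite pmulr_rge0 // subr_ge0.
Qed.

Lemma vnorm_ge0 u : 0 <= vnorm u.
Proof. exact: sqrtr_ge0. Qed.

Lemma sqr_vnorm u : vnorm u ^+ 2 = vdot u u.
Proof.
rewrite sqr_sqrtr; last by apply: sumr_ge0 => i _; rewrite sqr_ge0.
by apply: eq_bigr => i _; rewrite expr2.
Qed.

Lemma vnormE u : vnorm u = Num.sqrt (vdot u u).
Proof. by rewrite -sqr_vnorm sqrtr_sqr ger0_norm ?vnorm_ge0. Qed.

Lemma vnormZ k u : vnorm (k *: u) = `|k| * vnorm u.
Proof.
by rewrite !vnormE vdotZl vdotZr mulrA -expr2 sqrtrM ?sqr_ge0 // sqrtr_sqr.
Qed.

Lemma normr_vdot_le u v : `|vdot u v| <= vnorm u * vnorm v.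
Proof.
apply: ler_of_sqr; first by rewrite mulr_ge0 ?vnorm_ge0.
by rewrite real_normK ?num_real // exprMn !sqr_vnorm vdot_sqr_le.
Qed.

Lemma vdot_le u v : vdot u v <= vnorm u * vnorm v.
Proof. exact: le_trans (ler_norm _) (normr_vdot_le u v). Qed.

Lemma vnormD_le u v : vnorm (u + v) <= vnorm u + vnorm v.
Proof.
apply: ler_of_sqr; first by rewrite addr_ge0 ?vnorm_ge0.
rewrite sqr_vnorm -[u]scale1r -[v]scale1r vdot_comb2 !scale1r -!sqr_vnorm.
by have := vdot_le u v; nra.
Qed.

End InnerProduct.

Section OrthogonalProjection.
Variables (R : realType) (n : nat) (a : 'cV[R]_n).
Hypothesis a_unit : vnorm a = 1.

Definition orthproj v := v - vdot a v *: a.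

Lemma vdot_unit_self : vdot a a = 1.
Proof. by rewrite -sqr_vnorm a_unit expr1n. Qed.

Lemma orthprojD u v : orthproj (u + v) = orthproj u + orthproj v.
Proof. by rewrite /orthproj vdotDr scalerDl opprD addrACA. Qed.

Lemma orthprojZ k v : orthproj (k *: v) = k *: orthproj v.
Proof. by rewrite /orthproj vdotZr -scalerA scalerBr. Qed.

Lemma orthproj_line k : orthproj (k *: a) = 0.
Proof. by rewrite /orthproj vdotZr vdot_unit_self mulr1 subrr. Qed.

Lemma orthproj_split v : v = orthproj v + vdot a v *: a.
Proof. by rewrite subrK. Qed.

Lemma sqr_vnorm_orthproj v :
  vnorm (orthproj v) ^+ 2 = vnorm v ^+ 2 - vdot a v ^+ 2.
Proof.
have -> : orthproj v = 1 *: v + (- vdot a v) *: a by rewrite scale1r scaleNr.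
by rewrite !sqr_vnorm vdot_comb2 vdot_unit_self (vdotC v a); ring.
Qed.

Lemma vnorm_orthproj_le v : vnorm (orthproj v) <= vnorm v.
Proof.
apply: ler_of_sqr; first exact: vnorm_ge0.
by rewrite sqr_vnorm_orthproj lerBlDr lerDl sqr_ge0.
Qed.

Lemma vnorm_mulmx_split m (A : 'M[R]_(m, n)) k z :
    (forall v, vnorm (A *m v) <= k * vnorm v) ->
  vnorm (A *m z) <= k * vnorm (orthproj z) + `|vdot a z| * vnorm (A *m a).
Proof.
move=> A_le; rewrite {1}(orthproj_split z) mulmxDr -scalemxAr.
by apply: le_trans (vnormD_le _ _) _; rewrite vnormZ lerD2r A_le.
Qed.

End OrthogonalProjection.

Section SpectralNorm.
Variables (R : realType) (m n : nat).
Implicit Types (A : 'M[R]_(m, n)) (z : 'cV[R]_n).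

Lemma vdot_mulmxl A z (v : 'cV[R]_m) : vdot (A *m z) v = vdot z (A^T *m v).
Proof. by rewrite !vdot_trmx trmx_mul mulmxA. Qed.

Lemma sqr_vnorm_mulmx_le A z :
  vnorm (A *m z) ^+ 2 <= (\sum_i \sum_j A i j ^+ 2) * vnorm z ^+ 2.
Proof.
rewrite sqr_vnorm mulr_suml; apply: ler_sum => i _.
have -> : (A *m z) i 0 = vdot (row i A)^T z.
  by rewrite mxE; apply: eq_bigr => j _; rewrite !mxE.
have -> : \sum_j A i j ^+ 2 = vdot (row i A)^T (row i A)^T.
  by apply: eq_bigr => j _; rewrite !mxE expr2.
by rewrite -expr2 sqr_vnorm vdot_sqr_le.
Qed.

Lemma specnorm_set_ubound A :
  has_ubound [set vnorm (A *m v) | v in [set v : 'cV[R]_n | vnorm v = 1]].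
Proof.
have F_ge0 : 0 <= \sum_i \sum_j A i j ^+ 2.
  by do 2!apply: sumr_ge0 => ? _; rewrite sqr_ge0.
exists (Num.sqrt (\sum_i \sum_j A i j ^+ 2)) => _ [v /= v_unit <-].
apply: ler_of_sqr; first exact: sqrtr_ge0.
by have := sqr_vnorm_mulmx_le A v; rewrite v_unit expr1n mulr1 (sqr_sqrtr F_ge0).
Qed.

Lemma vnorm_mulmx_unit_le A z : vnorm z = 1 -> vnorm (A *m z) <= specnorm A.
Proof.
move=> z_unit; apply: sup_upper_bound; last by exists z.
by split; [exists (vnorm (A *m z)), z | exact: specnorm_set_ubound].
Qed.

Lemma vnorm_mulmx_le A z : vnorm (A *m z) <= specnorm A * vnorm z.
Proof.
have [z0|z_neq0] := eqVneq (vnorm z) 0.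
  rewrite z0 mulr0; apply: ler_of_sqr => //.
  by have := sqr_vnorm_mulmx_le A z; rewrite z0 expr0n mulr0.
have z_gt0 : 0 < vnorm z by rewrite lt_def z_neq0 vnorm_ge0.
set v := (vnorm z)^-1 *: z.
have v_unit : vnorm v = 1 by rewrite vnormZ ger0_norm ?invr_ge0 ?vnorm_ge0 // mulVf.
have := vnorm_mulmx_unit_le A v_unit.
rewrite /v -scalemxAr vnormZ ger0_norm ?invr_ge0 ?vnorm_ge0 //.
by rewrite mulrC ler_pdivrMr.
Qed.

Lemma specnorm_ge0 A : 0 <= specnorm A.
Proof.
have [[v v_unit]|no_unit] := pselect (exists v : 'cV[R]_n, vnorm v = 1).
  exact: le_trans (vnorm_ge0 _) (vnorm_mulmx_unit_le A v_unit).
rewrite /specnorm (_ : [set _ | _ in _] = set0) ?sup0 //.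
by apply/seteqP; split => // x [v v_unit _]; apply: no_unit; exists v.
Qed.

Lemma vnorm_trmx_mulmx_le A (v : 'cV[R]_m) :
  vnorm (A^T *m v) <= specnorm A * vnorm v.
Proof.
have k_ge0 : 0 <= specnorm A * vnorm v by rewrite mulr_ge0 ?specnorm_ge0 ?vnorm_ge0.
have AAT : vnorm (A^T *m v) ^+ 2 <= specnorm A * vnorm v * vnorm (A^T *m v).
  rewrite sqr_vnorm -vdot_mulmxl mulrAC; apply: le_trans (vdot_le _ _) _.
  by rewrite ler_wpM2r ?vnorm_ge0 ?vnorm_mulmx_le.
by move: AAT k_ge0; have := vnorm_ge0 (A^T *m v); nra.
Qed.

End SpectralNorm.

Section RankOnePerturbation.
Variables (R : realType) (n : nat) (a : 'cV[R]_n) (c : R).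
Hypothesis a_unit : vnorm a = 1.

Lemma mulmx_rank1 v : a *m a^T *m v = vdot a v *: a.
Proof.
apply/matrixP => i j; rewrite -mulmxA !mxE big_ord1 (ord1 j) mulrC.
by rewrite vdot_trmx.
Qed.

Lemma trmx_rank1_perturb (N : 'M[R]_n) :
  (c *: (a *m a^T) + N)^T = c *: (a *m a^T) + N^T.
Proof. by rewrite linearD linearZ /= trmx_mul trmxK. Qed.

Lemma orthproj_rank1_perturb (N : 'M[R]_n) v :
  orthproj a ((c *: (a *m a^T) + N) *m v) = orthproj a (N *m v).
Proof.
by rewrite mulmxDl -scalemxAl mulmx_rank1 scalerA orthprojD orthproj_line // add0r.
Qed.

Lemma vnorm_rank1_perturb_ge (N : 'M[R]_n) e :
  vnorm (N *m a) <= e * `|c| ->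
  `|c| - e * `|c| <= vnorm ((c *: (a *m a^T) + N) *m a).
Proof.
move=> Na_le; have := normr_vdot_le a ((c *: (a *m a^T) + N) *m a).
rewrite mulmxDl -scalemxAl mulmx_rank1 vdotDr !vdotZr vdot_unit_self // a_unit.
have := normr_vdot_le a (N *m a); rewrite a_unit !mul1r mulr1.
by have := lerB_normD c (vdot a (N *m a)); lra.
Qed.

Variables (N : 'M[R]_n) (sg e s : R) (u : 'cV[R]_n).
Let M := c *: (a *m a^T) + N.
Hypotheses (N_le : forall v, vnorm (N *m v) <= sg * vnorm v)
  (NT_le : forall v, vnorm (N^T *m v) <= sg * vnorm v)
  (Na_le : vnorm (N *m a) <= e * `|c|) (NTa_le : vnorm (N^T *m a) <= e * `|c|)
  (u_unit : vnorm u = 1) (u_sing : M^T *m M *m u = s ^+ 2 *: u)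
  (Ma_le : vnorm (M *m a) <= s).

Lemma vnorm_mulmx_singular : vnorm (M *m u) <= s.
Proof.
apply: ler_of_sqr; first exact: le_trans (vnorm_ge0 _) Ma_le.
by rewrite sqr_vnorm vdot_mulmxl mulmxA u_sing vdotZr -sqr_vnorm u_unit expr1n mulr1.
Qed.

Lemma vnorm_orthproj_mulmx_le :
  vnorm (orthproj a (M *m u)) <= sg * vnorm (orthproj a u) + e * `|c|.
Proof.
rewrite orthproj_rank1_perturb; apply: le_trans (vnorm_orthproj_le a_unit _) _.
apply: le_trans (vnorm_mulmx_split a u N_le) _; rewrite lerD2l.
have au_le1 : `|vdot a u| <= 1.
  by have := normr_vdot_le a u; rewrite a_unit u_unit mulr1.
by rewrite -[leRHS]mul1r ler_pM ?normr_ge0 ?vnorm_ge0.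
Qed.

Lemma vnorm_orthproj_singular_le :
  s ^+ 2 * vnorm (orthproj a u) <= sg * vnorm (orthproj a (M *m u)) + s * (e * `|c|).
Proof.
have -> : s ^+ 2 * vnorm (orthproj a u) = vnorm (orthproj a (s ^+ 2 *: u)).
  by rewrite orthprojZ vnormZ ger0_norm ?sqr_ge0.
rewrite -u_sing -mulmxA trmx_rank1_perturb orthproj_rank1_perturb.
apply: le_trans (vnorm_orthproj_le a_unit _) _.
apply: le_trans (vnorm_mulmx_split a _ NT_le) _; rewrite lerD2l.
rewrite ler_pM ?normr_ge0 ?vnorm_ge0 //.
by apply: le_trans (normr_vdot_le _ _) _; rewrite a_unit mul1r vnorm_mulmx_singular.
Qed.

Lemma right_singular_rank1_perturb_aligned (b : R) :
  c != 0 -> 0 < b -> (1 + b) * sg <= `|c| -> 2 * e * (1 + b) / b < 1 / 100 ->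
  99 / 100 <= vdot u a ^+ 2.
Proof.
move=> c_neq0 b_gt0 sg_le small_e.
have c_gt0 : 0 < `|c| by rewrite normr_gt0.
have sg_ge0 : 0 <= sg.
  by have := N_le a; rewrite a_unit mulr1; apply: le_trans (vnorm_ge0 _).
have e_ge0 : 0 <= e.
  by rewrite -(pmulr_lge0 _ c_gt0); exact: le_trans (vnorm_ge0 _) Na_le.
have r_le : 199 * vnorm (orthproj a u) <= 1.
  apply: (sin_angle_bound c_gt0 b_gt0 sg_ge0 e_ge0 (vnorm_ge0 _) sg_le _ _ small_e).
    exact: le_trans (vnorm_rank1_perturb_ge Na_le) Ma_le.
  apply: le_trans vnorm_orthproj_singular_le _.
  by have := ler_wpM2l sg_ge0 vnorm_orthproj_mulmx_le; nra.
have := sqr_vnorm_orthproj a_unit u; rewrite u_unit expr1n vdotC.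
by have := vnorm_ge0 (orthproj a u); nra.
Qed.

End RankOnePerturbation.

Theorem mainTheorem6 (R : realType) (n : nat) (Mg N : 'M[R]_n)
    (a1 : 'cV[R]_n) (c beta eps : R) :
  vnorm a1 = 1 ->
  Mg = c *: (a1 *m a1^T) + N ->
  c != 0 ->
  0 < beta ->
  (1 + beta) * specnorm N <= `|c| ->
  vnorm (N *m a1) <= eps * `|c| ->
  vnorm (N^T *m a1) <= eps * `|c| ->
  2 * eps * (1 + beta) / beta < 1 / 100 ->
  forall u : 'cV[R]_n, top_singular_vector Mg u ->
    vdot u a1 ^+ 2 >= 99 / 100.
Proof.
move=> a_unit -> c_neq0 beta_gt0 N_le Na_le NTa_le small_eps u [u_unit u_sing].
set M := c *: (a1 *m a1^T) + N in u_sing *.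
have [u_rsing|u_lsing] := u_sing.
  apply: (right_singular_rank1_perturb_aligned a_unit (vnorm_mulmx_le N)
    (vnorm_trmx_mulmx_le N) Na_le NTa_le u_unit u_rsing _ c_neq0 beta_gt0 N_le small_eps).
  exact: vnorm_mulmx_unit_le.
have NTT_le v : vnorm (N^T^T *m v) <= specnorm N * vnorm v.
  by rewrite trmxK vnorm_mulmx_le.
rewrite -[X in X *m _ *m _ = _]trmxK trmx_rank1_perturb in u_lsing.
apply: (right_singular_rank1_perturb_aligned a_unit (vnorm_trmx_mulmx_le N) NTT_le
  NTa_le _ u_unit u_lsing _ c_neq0 beta_gt0 N_le small_eps); first by rewrite trmxK.
by rewrite -trmx_rank1_perturb -[leRHS]mulr1 -a_unit vnorm_trmx_mulmx_le.
Qed.
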